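(* Let $G=(V,E)$ be a naturally ordered DAG. The saturation ideal $I_G:S_G\subseteq\mathbb R[\Sigma]$ is prime.
   Context: $\mathbb R[\Sigma]$ is the polynomial ring in symmetric variables $\sigma_{ij}=\sigma_{ji}$, $i,j\in V=[p]$; $ij\in E\Rightarrow i<j$. $I_G$ is the ideal generated by $|\Sigma_{ij|\mathrm{pa}(j)}|$ for $i<j$ with $ij\notin E$, where $\Sigma_{ij|K}$ has rows $(i,K)$ and columns $(j,K)$. $S_G=\{\prod_{i\in V}|\Sigma_{\mathrm{pa}(i)}|^{k_i}:k_i\in\mathbb N\}$ and $I:S=\{f:fs\in I\text{ for some }s\in S\}$. *)

From HB Require Import structures.
From mathcomp Require Import all_boot all_order all_algebra.
From mathcomp Require Import multinomials.mpoly.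
From Stdlib Require Reals.
From mathcomp Require Import Rstruct.

Set Implicit Arguments.
Unset Strict Implicit.
Unset Printing Implicit Defensive.
Import Order.TTheory GRing.Theory Num.Theory.
Local Open Scope ring_scope.

(* Index set of the symmetric variables sigma_ij = sigma_ji: pairs (i,j), i <= j. *)
Definition symIdx (p : nat) := {x : 'I_p * 'I_p | leq x.1 x.2}.
Definition nvars (p : nat) : nat := #|{: symIdx p}|.

Notation polyS p := {mpoly Rdefinitions.R[nvars p]}.

Lemma sym_pair_ok p (i j : 'I_p) :
  leq (if leq i j then (i, j) else (j, i)).1 (if leq i j then (i, j) else (j, i)).2.
Proof. by case: (leqP i j) => [//|/ltnW]. Qed.

Definition sigma (p : nat) (i j : 'I_p) : polyS p :=
  'X_(enum_rank (exist (fun x : 'I_p * 'I_p => leq x.1 x.2) _ (sym_pair_ok i j))).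

(* A DAG on V = [p] given by its edge relation; E i j means i -> j. *)
Definition naturally_ordered (p : nat) (E : rel 'I_p) : Prop :=
  forall i j : 'I_p, E i j -> (i < j)%N.

Definition pa (p : nat) (E : rel 'I_p) (j : 'I_p) : {set 'I_p} := [set k | E k j].

Definition minor_det (p n : nat) (r c : 'I_n -> 'I_p) : polyS p :=
  \det (\matrix_(a < n, b < n) sigma (r a) (c b)).

Definition det_K (p : nat) (K : {set 'I_p}) : polyS p :=
  minor_det (fun a : 'I_#|K| => enum_val a) (fun a : 'I_#|K| => enum_val a).

(* |Sigma_{ij|K}| : rows (i,K), columns (j,K) *)
Definition det_ijK (p : nat) (i j : 'I_p) (K : {set 'I_p}) : polyS p :=
  minor_det (fun a : 'I_#|K|.+1 => oapp (fun b : 'I_#|K| => enum_val b) i (unlift ord0 a))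
            (fun a : 'I_#|K|.+1 => oapp (fun b : 'I_#|K| => enum_val b) j (unlift ord0 a)).

Definition gen_G (p : nat) (E : rel 'I_p) (ij : 'I_p * 'I_p) : polyS p :=
  det_ijK ij.1 ij.2 (pa E ij.2).
Definition is_gen (p : nat) (E : rel 'I_p) (ij : 'I_p * 'I_p) : bool :=
  (ij.1 < ij.2)%N && ~~ E ij.1 ij.2.

Definition I_G (p : nat) (E : rel 'I_p) (f : polyS p) : Prop :=
  exists c : 'I_p * 'I_p -> polyS p,
    f = \sum_(ij | is_gen E ij) c ij * gen_G E ij.

Definition S_G (p : nat) (E : rel 'I_p) (s : polyS p) : Prop :=
  exists k : 'I_p -> nat, s = \prod_(i : 'I_p) det_K (pa E i) ^+ k i.

Definition saturation (p : nat) (I S : polyS p -> Prop) (f : polyS p) : Prop :=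
  exists s, S s /\ I (f * s).

Definition prime_ideal (T : comRingType) (I : T -> Prop) : Prop :=
  [/\ I 0,
      forall a b, I a -> I b -> I (a + b),
      forall a b, I b -> I (a * b),
      ~ I 1 &
      forall a b, I (a * b) -> I a \/ I b].

From HB Require Import structures.
From mathcomp Require Import all_boot all_algebra.
From mathcomp Require Import multinomials.mpoly.
From mathcomp Require Import Rstruct.
From mathcomp Require Import ring.
Set Implicit Arguments.
Unset Strict Implicit.
Unset Printing Implicit Defensive.
Import GRing.Theory.
Local Open Scope ring_scope.

(* I_G : S_G is the kernel of a ring map from R[Sigma] to its fraction field, hence
   prime.  Since the DAG is naturally ordered, the generator |Sigma_{ij|pa(j)}| is
   |Sigma_pa(j)| sigma_ij - r_ij, where r_ij and |Sigma_pa(j)| only involve diagonal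
   or edge variables and non-edge variables sigma_i'j' with (j', i') < (j, i)
   lexicographically.  The map fixes the diagonal and edge variables and sends the
   non-edge sigma_ij, recursively in that order, to r_ij / |Sigma_pa(j)|.  It kills
   I_G, and kills no element of S_G because each |Sigma_pa(j)| specializes to 1 at
   Sigma = 1.  Conversely, clearing the denominators one variable at a time shows
   that every polynomial of its kernel lies in I_G : S_G. *)

Local Notation "x %:F" := (@tofrac _ x).

Section RestrictVars.
Variables (R : comRingType) (n : nat).
Implicit Types (A : pred 'I_n) (f g : {mpoly R[n]}).

Lemma mpoly_ind_ring (P : {mpoly R[n]} -> Prop) :
  (forall c, P c%:MP) -> (forall u, P 'X_u) ->
  (forall f g, P f -> P g -> P (f + g)) ->
  (forall f g, P f -> P g -> P (f * g)) -> forall f, P f.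
Proof.
move=> hC hX hD hM f; elim/mpolyind: f => [|c m q _ _ hq]; first by rewrite -mpolyC0.
apply: (hD) => //; rewrite -mul_mpolyC; apply: (hM) => //.
rewrite mpolyXE_id; apply: (big_ind P); [by rewrite -mpolyC1 | exact: hM | ].
move=> u _; elim: (m u) => [|k IHk]; first by rewrite expr0 -mpolyC1.
by rewrite exprS; apply: (hM).
Qed.

Lemma eq_mmap (S : ringType) (f1 f2 : R -> S) (h1 h2 : 'I_n -> S) g :
  f1 =1 f2 -> h1 =1 h2 -> mmap f1 h1 g = mmap f2 h2 g.
Proof.
by move=> ef eh; apply: eq_bigr => m _; rewrite ef (mmap1_eq _ eh).
Qed.

Lemma mmapXU (S : comRingType) (f : {rmorphism R -> S}) (h : 'I_n -> S) u :
  mmap f h 'X_u = h u.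
Proof. by rewrite mmapX mmap1U. Qed.

Lemma rmorph_mmap (S S' : comRingType) (f : {rmorphism R -> S}) (h : 'I_n -> S)
    (phi : {rmorphism S -> S'}) g :
  phi (mmap f h g) = mmap (phi \o f) (phi \o h) g.
Proof.
elim/mpoly_ind_ring: g => [c|u|g1 g2 IH1 IH2|g1 g2 IH1 IH2].
- by rewrite !mmapC.
- by rewrite !mmapXU.
- by rewrite !rmorphD /= IH1 IH2.
- by rewrite !rmorphM /= IH1 IH2.
Qed.

Lemma mmapCX g : mmap (@mpolyC n R) (fun u => 'X_u) g = g.
Proof. by rewrite -[RHS]comp_mpoly_id; apply: eq_mmap => // u; rewrite tnth_mktuple. Qed.

Definition restrict_vars A : {mpoly R[n]} -> {mpoly R[n]} :=
  mmap (@mpolyC n R) (fun u => if A u then 'X_u else 0).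

HB.instance Definition _ A := GRing.RMorphism.copy (restrict_vars A)
  (mmap (@mpolyC n R) (fun u => if A u then 'X_u else 0)).

Lemma restrict_varsX A u : restrict_vars A 'X_u = if A u then 'X_u else 0.
Proof. exact: mmapXU. Qed.

Lemma mmap_restrict_vars (S : comRingType) (f : {rmorphism R -> S}) (h : 'I_n -> S) A g :
  mmap f h (restrict_vars A g) = mmap f (fun u => if A u then h u else 0) g.
Proof.
rewrite rmorph_mmap; apply: eq_mmap => [c|u] /=; first by rewrite mmapC.
by case: (A u); rewrite ?mmapXU ?rmorph0.
Qed.

Definition vars_in A : {pred {mpoly R[n]}} := [pred g | restrict_vars A g == g].
Lemma vars_in_subring A : subring_closed (vars_in A).
Proof.
split; first by rewrite inE rmorph1.
  by move=> f g; rewrite !inE => /eqP hf /eqP hg; rewrite rmorphB /= hf hg.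
by move=> f g; rewrite !inE => /eqP hf /eqP hg; rewrite rmorphM /= hf hg.
Qed.

HB.instance Definition _ A := GRing.isSubringClosed.Build _ (vars_in A)
  (vars_in_subring A).

Lemma vars_inC A c : c%:MP \in vars_in A.
Proof. by rewrite inE /restrict_vars mmapC. Qed.

Lemma vars_inX A u : A u -> 'X_u \in vars_in A.
Proof. by rewrite inE restrict_varsX => ->. Qed.

Lemma vars_in_det A m (M : 'M[{mpoly R[n]}]_m) :
  (forall a b, M a b \in vars_in A) -> \det M \in vars_in A.
Proof.
move=> hM; rewrite inE -det_map_mx; apply/eqP; congr (\det _).
by apply/matrixP => a b; rewrite mxE; apply/eqP/hM.
Qed.

Lemma eq_mmap_vars_in (S : comRingType) (f : {rmorphism R -> S}) (h1 h2 : 'I_n -> S) A g :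
  g \in vars_in A -> (forall u, A u -> h1 u = h2 u) -> mmap f h1 g = mmap f h2 g.
Proof.
move=> /eqP <- eh; rewrite !mmap_restrict_vars; apply: eq_mmap => // u.
by case hu: (A u); rewrite ?eh.
Qed.

Lemma vars_in_sub A A' g : (forall u, A u -> A' u) -> g \in vars_in A -> g \in vars_in A'.
Proof.
move=> hA /eqP hg; rewrite inE -hg {1}/restrict_vars mmap_restrict_vars.
apply/eqP/eq_mmap => // u.
by case hu: (A u); rewrite ?hA.
Qed.

Lemma vars_in_all A g : (forall u, A u) -> g \in vars_in A.
Proof.
by move=> hA; rewrite inE -[X in _ == X]mmapCX; apply/eqP/eq_mmap => // u; rewrite hA.
Qed.

End RestrictVars.

Section FracEval.
Variables (R : fieldType) (n : nat) (e : 'I_n -> R).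
Local Notation K := {fraction {mpoly R[n]}}.

Definition fracC : {rmorphism R -> K} := @tofrac _ \o @mpolyC n R.

Definition frac_eval (x : K) (r : R) :=
  exists a b, [/\ meval e b != 0, x = a%:F / b%:F & r = meval e a / meval e b].

Lemma meval_neq0 (b : {mpoly R[n]}) : meval e b != 0 -> b != 0.
Proof. by apply: contra => /eqP ->; rewrite meval0. Qed.

Lemma frac_eval_tofrac a : frac_eval a%:F (meval e a).
Proof. by exists a, 1; rewrite meval1 oner_neq0 rmorph1 !divr1. Qed.

Lemma frac_evalD x y r t : frac_eval x r -> frac_eval y t -> frac_eval (x + y) (r + t).
Proof.
move=> [a [b [hb -> ->]]] [c [d [hd -> ->]]].
exists (a * d + c * b), (b * d); rewrite mevalM mulf_neq0 //; split => //.
  by rewrite addf_div ?tofrac_eq0 ?meval_neq0 // rmorphD !rmorphM.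
by rewrite addf_div // mevalD !mevalM.
Qed.

Lemma frac_evalM x y r t : frac_eval x r -> frac_eval y t -> frac_eval (x * y) (r * t).
Proof.
move=> [a [b [hb -> ->]]] [c [d [hd -> ->]]].
exists (a * c), (b * d); rewrite mevalM mulf_neq0 //; split => //.
  by rewrite mulf_div !rmorphM.
by rewrite mulf_div !mevalM.
Qed.

Lemma frac_evalV x y r t :
  frac_eval x r -> frac_eval y t -> t != 0 -> frac_eval (x / y) (r / t).
Proof.
move=> [a [b [hb -> ->]]] [c [d [hd -> ->]]] ht.
have hc : meval e c != 0 by apply: contra ht => /eqP ->; rewrite mul0r.
exists (a * d), (b * c); rewrite mevalM mulf_neq0 //; split => //.
  by rewrite invf_div mulf_div !rmorphM.
by rewrite invf_div mulf_div !mevalM.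
Qed.

Lemma frac_eval_neq0 x r : frac_eval x r -> r != 0 -> x != 0.
Proof.
move=> [a [b [hb -> ->]]] hr.
have ha : meval e a != 0 by apply: contra hr => /eqP ->; rewrite mul0r.
by rewrite mulf_neq0 // ?invr_eq0 tofrac_eq0 meval_neq0.
Qed.

Lemma frac_eval_mmap (psi : 'I_n -> K) :
  (forall u, frac_eval (psi u) (e u)) ->
  forall g, frac_eval (mmap fracC psi g) (meval e g).
Proof.
move=> hpsi; elim/mpoly_ind_ring => [c|u|g1 g2 IH1 IH2|g1 g2 IH1 IH2].
- by rewrite mmapC mevalC -[c in frac_eval _ c](mevalC e c); apply: frac_eval_tofrac.
- by rewrite mmapXU mevalXU.
- by rewrite rmorphD mevalD; apply: frac_evalD.
- by rewrite rmorphM mevalM; apply: frac_evalM.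
Qed.

End FracEval.

Lemma prime_ideal_kernel (T : comRingType) (D : idomainType) (phi : {rmorphism T -> D})
    (I : T -> Prop) :
  (forall f, I f <-> phi f = 0) -> prime_ideal I.
Proof.
move=> hI; split.
- by apply/hI; rewrite rmorph0.
- by move=> a b /hI ha /hI hb; apply/hI; rewrite rmorphD ha hb addr0.
- by move=> a b /hI hb; apply/hI; rewrite rmorphM hb mulr0.
- by move/hI/eqP; rewrite rmorph1 oner_eq0.
- move=> a b /hI/eqP; rewrite rmorphM mulf_eq0.
  by case/orP => /eqP h; [left | right]; apply/hI.
Qed.

Local Notation R := Rdefinitions.R.

Lemma mixed_radix_lt (x y j p k : nat) :
  (x < p)%N -> (y < j)%N -> (j * p <= k)%N -> (y * p + x < k)%N.
Proof.
move=> hx hy hk; apply: leq_trans hk; apply: (@leq_trans (y.+1 * p)).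
  by rewrite mulSn [(p + _)%N]addnC ltn_add2l.
by rewrite leq_mul2r hy orbT.
Qed.

Section SymmetricVariables.
Variable p : nat.
Local Notation n := (nvars p).

Definition sigma_idx (i j : 'I_p) : 'I_n :=
  enum_rank (exist (fun x : 'I_p * 'I_p => (x.1 <= x.2)%N) _ (sym_pair_ok i j)).

Definition sigma_pair (u : 'I_n) : 'I_p * 'I_p := val (enum_val u).

Lemma sigmaE i j : sigma i j = 'X_(sigma_idx i j). Proof. by []. Qed.

Lemma sigma_pair_idx i j :
  sigma_pair (sigma_idx i j) = if (i <= j)%N then (i, j) else (j, i).
Proof. by rewrite /sigma_pair /sigma_idx enum_rankK. Qed.

Lemma sigma_idx_pair u : sigma_idx (sigma_pair u).1 (sigma_pair u).2 = u.
Proof.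
apply: enum_val_inj; rewrite /sigma_idx enum_rankK; apply: val_inj => /=.
by rewrite (valP (enum_val u)) -surjective_pairing.
Qed.

Definition id_point (u : 'I_n) : R := ((sigma_pair u).1 == (sigma_pair u).2)%:R.

Lemma meval_id_sigma i j : meval id_point (sigma i j) = (i == j)%:R.
Proof.
rewrite sigmaE mevalXU /id_point sigma_pair_idx.
by case: leqP => //= _; rewrite eq_sym.
Qed.

Lemma meval_id_det_K (S : {set 'I_p}) : meval id_point (det_K S) = 1.
Proof.
rewrite /det_K /minor_det -det_map_mx -[RHS](det1 _ #|S|); congr (\det _).
by apply/matrixP => a b; rewrite !mxE /= meval_id_sigma (inj_eq enum_val_inj).
Qed.

End SymmetricVariables.

Arguments sigma_idx {p}.
Arguments sigma_pair {p}.
Arguments id_point {p}.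

Section Graph.
Variables (p : nat) (E : rel 'I_p).
Hypothesis hE : naturally_ordered E.
Local Notation n := (nvars p).
Local Notation T := {mpoly R[n]}.
Local Notation K := {fraction T}.

Definition free_var (u : 'I_n) : bool :=
  ((sigma_pair u).1 == (sigma_pair u).2) || E (sigma_pair u).1 (sigma_pair u).2.

(* Non-edge variables are eliminated in stages, sigma_ij (i < j) at stage j * p + i. *)
Definition var_rank (u : 'I_n) : nat := ((sigma_pair u).2 * p + (sigma_pair u).1)%N.

Definition settled (k : nat) (u : 'I_n) : bool := free_var u || (var_rank u < k)%N.

Lemma settled_mono k k' u : (k <= k')%N -> settled k u -> settled k' u.
Proof.
by rewrite /settled => hk /orP [->//|hu]; apply/orP; right; apply: leq_trans hu hk.
Qed.

Lemma settled_lower (a b j : 'I_p) k :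
  (a < j)%N -> (b < j)%N -> (j * p <= k)%N -> settled k (sigma_idx a b).
Proof.
move=> ha hb hk; apply/orP; right; rewrite /var_rank sigma_pair_idx.
by case: (leqP a b) => _ /=; apply: mixed_radix_lt (ltn_ord _) _ hk.
Qed.

Lemma settled_edge (a j : 'I_p) k : E a j -> settled k (sigma_idx a j).
Proof.
move=> haj; apply/orP; left.
by rewrite /free_var sigma_pair_idx (ltnW (hE haj)) /= haj orbT.
Qed.

Lemma settled_all u : settled (p * p) u.
Proof. by apply/orP; right; apply: mixed_radix_lt (ltn_ord _) (ltn_ord _) (leqnn _). Qed.

Lemma nonedge_idx (i j : 'I_p) : (i < j)%N -> ~~ E i j ->
  [/\ sigma_pair (sigma_idx i j) = (i, j), ~~ free_var (sigma_idx i j)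
    & var_rank (sigma_idx i j) = (j * p + i)%N].
Proof.
move=> hij hn; rewrite /free_var /var_rank sigma_pair_idx (ltnW hij) /=.
by rewrite (negbTE hn) orbF neq_ltn hij.
Qed.

Lemma nonfree_var u : ~~ free_var u ->
  [/\ ((sigma_pair u).1 < (sigma_pair u).2)%N, ~~ E (sigma_pair u).1 (sigma_pair u).2
    & u = sigma_idx (sigma_pair u).1 (sigma_pair u).2].
Proof.
rewrite /free_var negb_or => /andP [hne hn]; split; rewrite ?sigma_idx_pair //.
by rewrite ltn_neqAle hne (valP (enum_val u)).
Qed.

Lemma id_point_nonfree u : ~~ free_var u -> id_point u = 0.
Proof. by rewrite /free_var /id_point negb_or => /andP [/negbTE ->]. Qed.

Definition det_pa (j : 'I_p) : T := det_K (pa E j).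

Lemma enum_pa_edge (j : 'I_p) (b : 'I_#|pa E j|) : E (enum_val b) j.
Proof. by have := enum_valP b; rewrite inE. Qed.

Definition gen_mx (i j : 'I_p) : 'M[T]_(#|pa E j|.+1) :=
  \matrix_(a, b)
    sigma (oapp enum_val i (unlift ord0 a)) (oapp enum_val j (unlift ord0 b)).

Definition gen_rest (i j : 'I_p) : T :=
  - \sum_(b < #|pa E j|)
      gen_mx i j ord0 (lift ord0 b) * cofactor (gen_mx i j) ord0 (lift ord0 b).

Lemma gen_G_expand (i j : 'I_p) : gen_G E (i, j) = det_pa j * sigma i j - gen_rest i j.
Proof.
have -> : gen_G E (i, j) = \det (gen_mx i j) by [].
rewrite (expand_det_row _ ord0) big_ord_recl /gen_rest opprK; congr (_ + _).
have -> : gen_mx i j ord0 ord0 = sigma i j by rewrite mxE unlift_none.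
rewrite mulrC /cofactor; congr (_ * _).
rewrite [X in (-1) ^+ X](_ : _ = 0%N) // expr0 mul1r /det_pa /det_K /minor_det.
by congr (\det _); apply/matrixP => a b; rewrite !mxE !liftK.
Qed.

Lemma gen_mx_settled (i j : 'I_p) (a b : 'I_#|pa E j|.+1) :
  (i < j)%N -> (a != ord0) || (b != ord0) ->
  gen_mx i j a b \in vars_in (settled (j * p + i)).
Proof.
move=> hij hab; rewrite mxE; apply: vars_inX.
case: (unliftP ord0 a) => [a' _|ea]; case: (unliftP ord0 b) => [b' _|eb] /=.
- by apply: settled_lower (hE (enum_pa_edge _)) (hE (enum_pa_edge _)) (leq_addr _ _).
- exact/settled_edge/enum_pa_edge.
- by apply: settled_lower hij (hE (enum_pa_edge _)) (leq_addr _ _).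
- by move: hab; rewrite ea eb eqxx.
Qed.

Lemma gen_rest_settled (i j : 'I_p) :
  (i < j)%N -> gen_rest i j \in vars_in (settled (j * p + i)).
Proof.
move=> hij; rewrite rpredN; apply/rpred_sum => b _; apply: rpredM.
  by apply: gen_mx_settled; rewrite ?neq_lift ?orbT.
rewrite /cofactor rpredM ?rpredX ?rpredN ?rpred1 //; apply: vars_in_det => a c.
have -> : row' ord0 (col' (lift ord0 b) (gen_mx i j)) a c
          = gen_mx i j (lift ord0 a) (lift (lift ord0 b) c) by rewrite !mxE.
by apply: gen_mx_settled; rewrite ?neq_lift.
Qed.

Lemma det_pa_settled (j : 'I_p) k : (j * p <= k)%N -> det_pa j \in vars_in (settled k).
Proof.
move=> hk; apply: vars_in_det => a b; rewrite mxE; apply: vars_inX.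
exact: settled_lower (hE (enum_pa_edge _)) (hE (enum_pa_edge _)) hk.
Qed.

Lemma gen_G_settled (i j : 'I_p) k : (i < j)%N -> ~~ E i j -> (j * p + i < k)%N ->
  gen_G E (i, j) \in vars_in (settled k).
Proof.
move=> hij hn hk; have hk' := ltnW hk; have [_ _ rank_ij] := nonedge_idx hij hn.
rewrite gen_G_expand rpredB ?rpredM //.
- by apply: det_pa_settled; apply: leq_trans hk'; apply: leq_addr.
- by apply/vars_inX/orP; right; rewrite rank_ij.
- exact: vars_in_sub (fun u => settled_mono hk') (gen_rest_settled hij).
Qed.

Lemma meval_id_gen_rest (i j : 'I_p) : (i < j)%N -> ~~ E i j ->
  meval id_point (gen_rest i j) = 0.
Proof.
move=> hij hn; rewrite mevalN rmorph_sum big1 ?oppr0 // => b _.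
rewrite rmorphM /= !mxE unlift_none liftK /= meval_id_sigma.
case: eqP => [ei|_]; last by rewrite mul0r.
by move: (enum_pa_edge b); rewrite -ei (negbTE hn).
Qed.

Lemma I_G0 : I_G E 0.
Proof. by exists (fun _ => 0); rewrite big1 // => ij _; rewrite mul0r. Qed.

Lemma I_GD f g : I_G E f -> I_G E g -> I_G E (f + g).
Proof.
move=> [c1 ->] [c2 ->]; exists (fun ij => c1 ij + c2 ij).
by rewrite -big_split; apply: eq_bigr => ij _; rewrite mulrDl.
Qed.

Lemma I_GM a f : I_G E f -> I_G E (a * f).
Proof.
move=> [c ->]; exists (fun ij => a * c ij).
by rewrite mulr_sumr; apply: eq_bigr => ij _; rewrite mulrA.
Qed.

Lemma I_G_gen ij : is_gen E ij -> I_G E (gen_G E ij).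
Proof.
move=> hij; exists (fun ij' => (ij' == ij)%:R).
rewrite (bigD1 ij) //= eqxx mul1r big1 ?addr0 // => ij' /andP [_ /negbTE ->].
by rewrite mul0r.
Qed.

Lemma S_G1 : S_G E 1.
Proof. by exists (fun _ => 0%N); rewrite big1 // => i _; rewrite expr0. Qed.

Lemma S_GM s t : S_G E s -> S_G E t -> S_G E (s * t).
Proof.
move=> [k ->] [l ->]; exists (fun i => (k i + l i)%N).
by rewrite -big_split; apply: eq_bigr => i _; rewrite exprD.
Qed.

Lemma S_G_det_pa j : S_G E (det_pa j).
Proof.
exists (fun i => (i == j) : nat); rewrite (bigD1 j) //= eqxx expr1 big1 ?mulr1 // => i.
by move/negbTE ->; rewrite expr0.
Qed.

Local Notation subst psi := (mmap (fracC R n) psi).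

Lemma subst_det_pa_neq0 (psi : 'I_n -> K) j :
  (forall u, frac_eval id_point (psi u) (id_point u)) -> subst psi (det_pa j) != 0.
Proof.
move=> hpsi; apply: (frac_eval_neq0 (frac_eval_mmap hpsi _)).
by rewrite meval_id_det_K oner_neq0.
Qed.

Lemma subst_S_G_neq0 (psi : 'I_n -> K) s :
  (forall u, frac_eval id_point (psi u) (id_point u)) -> S_G E s -> subst psi s != 0.
Proof.
move=> hpsi [k ->]; rewrite rmorph_prod; apply/prodf_neq0 => i _.
by rewrite rmorphXn expf_neq0 // subst_det_pa_neq0.
Qed.

(* The second condition says that psi is regular at Sigma = 1, with the value of
   the identity there; hence psi maps no |Sigma_pa(j)| to 0 (see
   subst_det_pa_neq0). *)
Definition good_subst (k : nat) (psi : 'I_n -> K) :=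
  [/\ forall u, free_var u -> psi u = ('X_u)%:F,
      forall u, frac_eval id_point (psi u) (id_point u) &
      forall i j : 'I_p, (i < j)%N -> ~~ E i j -> (j * p + i < k)%N ->
        subst psi (gen_G E (i, j)) = 0].

Lemma good_subst0 : good_subst 0 (fun u => ('X_u)%:F).
Proof.
split=> // u; rewrite -[id_point u](mevalXU id_point u).
exact: frac_eval_tofrac.
Qed.

Definition subst_step (k : nat) (psi : 'I_n -> K) (u : 'I_n) : K :=
  if ~~ free_var u && (var_rank u == k) then
    subst psi (gen_rest (sigma_pair u).1 (sigma_pair u).2) /
    subst psi (det_pa (sigma_pair u).2)
  else psi u.

Lemma subst_step_settled k psi f :
  f \in vars_in (settled k) -> subst (subst_step k psi) f = subst psi f.
Proof.
move=> hf; apply: eq_mmap_vars_in hf _ => u /orP hu; rewrite /subst_step.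
by case: hu => [-> | /ltn_eqF ->] //; rewrite andbF.
Qed.

Lemma good_subst_step k psi : good_subst k psi -> good_subst k.+1 (subst_step k psi).
Proof.
move=> [hfree heval hgen]; split.
- by move=> u hu; rewrite /subst_step hu /=; apply: hfree.
- move=> u; rewrite /subst_step; case: ifP => [/andP [hu _]|_]; last exact: heval.
  have [hij hn _] := nonfree_var hu.
  rewrite id_point_nonfree // -(mul0r (meval id_point (det_pa (sigma_pair u).2))^-1).
  rewrite -(meval_id_gen_rest hij hn).
  apply: frac_evalV; try exact: frac_eval_mmap.
  by rewrite meval_id_det_K oner_neq0.
- move=> i j hij hn; rewrite ltnS leq_eqVlt => /orP [/eqP hk|hk]; last first.
    by rewrite subst_step_settled ?hgen //; apply: gen_G_settled.
  have [pair_ij nfree_ij rank_ij] := nonedge_idx hij hn.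
  rewrite gen_G_expand sigmaE rmorphB rmorphM /= mmapXU.
  rewrite !subst_step_settled -?hk ?gen_rest_settled ?det_pa_settled ?leq_addr //.
  rewrite /subst_step nfree_ij rank_ij hk eqxx pair_ij /=.
  by rewrite mulrC mulfVK ?subrr // subst_det_pa_neq0.
Qed.

Lemma exists_good_subst : exists psi, good_subst (p * p) psi.
Proof.
elim: (p * p)%N => [|k [psi hpsi]].
  by exists (fun u => ('X_u)%:F); apply: good_subst0.
by exists (subst_step k psi); apply: good_subst_step.
Qed.

Lemma subst_I_G psi f : good_subst (p * p) psi -> I_G E f -> subst psi f = 0.
Proof.
move=> [_ _ hgen] [c ->]; rewrite rmorph_sum big1 // => -[i j] /andP [/= hij hn].
rewrite rmorphM /= hgen ?mulr0 //.
exact: mixed_radix_lt (ltn_ord _) (ltn_ord _) (leqnn _).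
Qed.

Lemma saturation_subst_eq0 psi f :
  good_subst (p * p) psi -> saturation (I_G E) (S_G E) f -> subst psi f = 0.
Proof.
move=> hpsi [s [hs hfs]]; have [_ heval _] := hpsi.
move: (subst_I_G hpsi hfs); rewrite rmorphM /= => /eqP.
by rewrite mulf_eq0 (negbTE (subst_S_G_neq0 heval hs)) orbF => /eqP.
Qed.

Definition eliminable (k : nat) (g : T) :=
  exists2 s, S_G E s /\ s \in vars_in (settled k) &
    exists2 F, F \in vars_in (settled k) & I_G E (s * g - F).

Lemma eliminable_settled k g : g \in vars_in (settled k) -> eliminable k g.
Proof.
move=> hg; exists 1; first by split; [apply: S_G1 | apply: rpred1].
by exists g; rewrite // mul1r subrr; apply: I_G0.
Qed.

Lemma eliminableD k g1 g2 : eliminable k g1 -> eliminable k g2 -> eliminable k (g1 + g2).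
Proof.
move=> [s1 [hs1 hs1k] [F1 hF1 hI1]] [s2 [hs2 hs2k] [F2 hF2 hI2]].
exists (s1 * s2); first by split; [apply: S_GM | apply: rpredM].
exists (s2 * F1 + s1 * F2); first by rewrite rpredD ?rpredM.
have -> : s1 * s2 * (g1 + g2) - (s2 * F1 + s1 * F2) =
          s2 * (s1 * g1 - F1) + s1 * (s2 * g2 - F2) by ring.
by apply: I_GD; apply: I_GM.
Qed.

Lemma eliminableM k g1 g2 : eliminable k g1 -> eliminable k g2 -> eliminable k (g1 * g2).
Proof.
move=> [s1 [hs1 hs1k] [F1 hF1 hI1]] [s2 [hs2 hs2k] [F2 hF2 hI2]].
exists (s1 * s2); first by split; [apply: S_GM | apply: rpredM].
exists (F1 * F2); first by rewrite rpredM.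
have -> : s1 * s2 * (g1 * g2) - F1 * F2 =
          s2 * g2 * (s1 * g1 - F1) + F1 * (s2 * g2 - F2) by ring.
by apply: I_GD; apply: I_GM.
Qed.

(* The only new variable at stage k + 1 is the sigma_ij of rank k, and
   |Sigma_pa(j)| sigma_ij - gen_rest i j is a generator of I_G. *)
Lemma eliminable_var k u : settled k.+1 u -> eliminable k 'X_u.
Proof.
move=> hu1; have [hu|hu] := boolP (settled k u); first exact/eliminable_settled/vars_inX.
have [hnf hk] : ~~ free_var u /\ var_rank u = k.
  move: hu hu1; rewrite /settled; case: (free_var u) => //=.
  by rewrite -leqNgt ltnS => h1 h2; split=> //; apply/eqP; rewrite eqn_leq h1 h2.
have [hij hn eu] := nonfree_var hnf; rewrite /var_rank in hk.
move: (sigma_pair u) hij hn eu hk => [i j] /= hij hn -> hk.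
exists (det_pa j).
  by split; [apply: S_G_det_pa | rewrite det_pa_settled -?hk ?leq_addr].
exists (gen_rest i j); first by rewrite -hk gen_rest_settled.
by rewrite -sigmaE -gen_G_expand; apply: I_G_gen; apply/andP.
Qed.

Lemma eliminable_vars_in k g : g \in vars_in (settled k.+1) -> eliminable k g.
Proof.
move=> /eqP <-; elim/mpoly_ind_ring: g => [c|u|g1 g2|g1 g2].
- by rewrite /restrict_vars mmapC; apply/eliminable_settled/vars_inC.
- rewrite restrict_varsX; case: ifP => [|_]; first exact: eliminable_var.
  exact/eliminable_settled/rpred0.
- by rewrite rmorphD; apply: eliminableD.
- by rewrite rmorphM; apply: eliminableM.
Qed.

Lemma subst_settled0 psi g : (forall u, free_var u -> psi u = ('X_u)%:F) ->
  g \in vars_in (settled 0) -> subst psi g = g%:F.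
Proof.
move=> hfree hg; rewrite -[g in RHS]mmapCX rmorph_mmap.
by apply: (@eq_mmap_vars_in _ _ _ (fracC R n) _ _ _ _ hg) => u /orP [/hfree|].
Qed.

Lemma subst_eq0_saturation psi f :
  good_subst (p * p) psi -> subst psi f = 0 -> saturation (I_G E) (S_G E) f.
Proof.
move=> hpsi hf; have [hfree _ _] := hpsi.
have := vars_in_all f settled_all; move: (p * p)%N f hf.
elim=> [|k IHk] g hg0 hg.
  move: hg0; rewrite subst_settled0 // => /eqP; rewrite tofrac_eq0 => /eqP ->.
  by exists 1; split; [apply: S_G1 | rewrite mul0r; apply: I_G0].
have [s [hs _] [F hF hI]] := eliminable_vars_in hg.
have hF0 : subst psi F = 0.
  have := subst_I_G hpsi hI; rewrite rmorphB rmorphM /= hg0 mulr0 sub0r.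
  by move/eqP; rewrite oppr_eq0 => /eqP.
have [t [ht hFt]] := IHk F hF0 hF.
exists (s * t); split; first exact: S_GM.
have -> : g * (s * t) = t * (s * g - F) + F * t by ring.
by apply: I_GD => //; apply: I_GM.
Qed.

End Graph.

Theorem mainTheorem10 (p : nat) (E : rel 'I_p) :
  naturally_ordered E ->
  @prime_ideal {mpoly Rdefinitions.R[nvars p]} (saturation (I_G E) (S_G E)).
Proof.
move=> hE; have [psi hpsi] := exists_good_subst hE.
apply: (prime_ideal_kernel (phi := mmap (fracC R (nvars p)) psi)) => f.
by split; [apply: saturation_subst_eq0 | apply: subst_eq0_saturation].
Qed.
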